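(* Let $(m,q,d,\tau)$ be suitable parameters and let $\rho=f,X_1,\dots,X_m$ where $f:\Omega\to\mathbb F_q^{d+1}$ is a bijection, $X_1,\dots,X_m$ form a partition of $\mathbb F_q^d$ and $|X_k|=\tau_{B_k}$ for all $k$. Then for every transversal hyperplane $V$ of $\mathbb F_q^{d+1}$, $N(V,\rho)$ is a deal of distribution type $\tau$ and $(N(V,\rho),\rho)$ is an execution of the shifted projection protocol.
   Context: Agents $\mathcal A=\{A,B_1,\dots,B_m\}$ speak in order $A,B_1,\dots,B_m$. A distribution type is a vector $\tau=(\tau_P)_{P\in\mathcal A}$ of positive integers, $|\tau|=\sum_P\tau_P$; the deck $\Omega$ has $|\tau|$ cards; a deal of type $\tau$ is a partition $H=(H_P)_P$ of $\Omega$ with $|H_P|=\tau_P$. Suitable parameters: $m>1$, $q>m$ a prime power, $d>0$, $|\tau|=q^{d+1}$, $\tau_A=q^{d+1}-q^d$, $\tau_{B_k}>q^{d-1}$ for each $k$. A transversal hyperplane $V\subseteq\mathbb F_q^{d+1}$ is $\{x: x_{d+1}=a_1x_1+\dots+a_dx_d+b\}$; $\sigma(V)=(a_1,\dots,a_d)$; $\pi$ projects onto the first $d$ coordinates, $\pi|_V$ is a bijection onto $\mathbb F_q^d$ with inverse $\iota_V$; $\pi^V_\downarrow(w)=\pi(w)+\sigma(V)$ for $w\in V$ and $\pi^V_\uparrow(y)=\iota_V(y-\sigma(V))$ for $y\in\mathbb F_q^d$. $N(V,\rho)$ is defined by $N(V,\rho)_A=f^{-1}[\mathbb F_q^{d+1}\setminus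 V]$ and $N(V,\rho)_{B_k}=f^{-1}[\pi^V_\uparrow[X_k]]$ for $k\in[1,m]$. Shifted projection protocol: maximal executions for deal $H$ are $(H,f,X_1,\dots,X_m)$ with $f:\Omega\to\mathbb F_q^{d+1}$ a bijection such that $V=\mathbb F_q^{d+1}\setminus f[H_A]$ is a transversal hyperplane and $X_k=\pi^V_\downarrow[f[H_{B_k}]]$; $\Pi(H,\rho)$ is the set of tokens $a$ with $(H,\rho*a)$ an initial segment of a maximal execution; an execution is $(H,a_0,\dots,a_n)$ with $a_k\in\Pi(H,a_0,\dots,a_{k-1})$ for all $k$. *)

From HB Require Import structures.
From mathcomp Require Import all_boot all_order all_algebra.
Set Implicit Arguments. Unset Strict Implicit. Unset Printing Implicit Defensive.
Import GRing.Theory.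
Local Open Scope ring_scope.

(* Agents: [None] is A, [Some k] (k : 'I_m) is B_{k+1}. *)
Definition agent (m : nat) := option 'I_m.

Definition tau_size (m : nat) (tau : agent m -> nat) : nat :=
  (\sum_(P : agent m) tau P)%N.

Definition is_prime_power (q : nat) : Prop := exists p k, prime p /\ q = (p ^ k)%N.

Definition suitable (m q d : nat) (tau : agent m -> nat) : Prop :=
  [/\ (1 < m)%N, (m < q)%N, is_prime_power q & (0 < d)%N] /\
  [/\ (forall P, 0 < tau P)%N,
      tau_size tau = (q ^ d.+1)%N,
      tau None = (q ^ d.+1 - q ^ d)%N
    & forall k : 'I_m, (q ^ d.-1 < tau (Some k))%N].
Arguments suitable : clear implicits.

Definition deal (Omega : finType) (m : nat) (tau : agent m -> nat)
  (H : agent m -> {set Omega}) : Prop :=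
  [/\ forall P, #|H P| = tau P,
      forall P Q, P != Q -> [disjoint H P & H Q]
    & \bigcup_P H P = [set: Omega]].

Definition is_partition (T : finType) (m : nat) (X : 'I_m -> {set T}) : Prop :=
  (forall i j, i != j -> [disjoint X i & X j]) /\ \bigcup_i X i = [set: T].

Definition proj (F : finFieldType) (d : nat) (x : 'rV[F]_d.+1) : 'rV[F]_d :=
  \row_(i < d) x 0 (widen_ord (leqnSn d) i).

(* the transversal hyperplane x_{d+1} = a_1 x_1 + ... + a_d x_d + b;
   sigma(hyp a b) = a *)
Definition hyp (F : finFieldType) (d : nat) (a : 'rV[F]_d) (b : F)
  : {set 'rV[F]_d.+1} :=
  [set x : 'rV[F]_d.+1 | x 0 ord_max == \sum_(i < d) a 0 i * x 0 (widen_ord (leqnSn d) i) + b].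

Definition transversal (F : finFieldType) (d : nat) (V : {set 'rV[F]_d.+1}) : Prop :=
  exists a b, V = hyp a b.

Definition proj_down (F : finFieldType) (d : nat) (a : 'rV[F]_d)
  (W : {set 'rV[F]_d.+1}) : {set 'rV[F]_d} :=
  [set proj w + a | w in W].

(* pi^V_up[Y] = { iota_V(y - sigma V) | y in Y } = { w in V | pi w + sigma V in Y } *)
Definition proj_up (F : finFieldType) (d : nat) (V : {set 'rV[F]_d.+1})
  (a : 'rV[F]_d) (Y : {set 'rV[F]_d}) : {set 'rV[F]_d.+1} :=
  [set w in V | proj w + a \in Y].

Definition N (Omega : finType) (F : finFieldType) (m d : nat)
  (a : 'rV[F]_d) (b : F) (f : {ffun Omega -> 'rV[F]_d.+1})
  (X : 'I_m -> {set 'rV[F]_d}) : agent m -> {set Omega} :=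
  fun P => match P with
           | None => f @^-1: (~: hyp a b)
           | Some k => f @^-1: proj_up (hyp a b) a (X k)
           end.

Inductive token (Omega : finType) (F : finFieldType) (d : nat) : Type :=
  | TokF of {ffun Omega -> 'rV[F]_d.+1}
  | TokX of {set 'rV[F]_d}.

Definition rho (Omega : finType) (F : finFieldType) (m d : nat)
  (f : {ffun Omega -> 'rV[F]_d.+1}) (X : 'I_m -> {set 'rV[F]_d})
  : seq (token Omega F d) :=
  @TokF Omega F d f :: [seq @TokX Omega F d (X k) | k <- enum 'I_m].

Definition maxexec (Omega : finType) (F : finFieldType) (m d : nat)
  (tau : agent m -> nat) (H : agent m -> {set Omega}) (s : seq (token Omega F d))
  : Prop :=
  deal tau H /\
  exists (f : {ffun Omega -> 'rV[F]_d.+1}) (X : 'I_m -> {set 'rV[F]_d}),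
    [/\ s = rho f X, bijective f &
        exists (a : 'rV[F]_d) (b : F),
          ~: (f @: H None) = hyp a b /\
          forall k, X k = proj_down a (f @: H (Some k))].

Definition Pi (Omega : finType) (F : finFieldType) (m d : nat)
  (tau : agent m -> nat) (H : agent m -> {set Omega}) (r : seq (token Omega F d))
  (t : token Omega F d) : Prop :=
  exists s', maxexec tau H (rcons r t ++ s').

Definition execution (Omega : finType) (F : finFieldType) (m d : nat)
  (tau : agent m -> nat) (H : agent m -> {set Omega}) (s : seq (token Omega F d))
  : Prop :=
  forall s1 t s2, s = s1 ++ t :: s2 -> Pi tau H s1 t.

(* Over a transversal hyperplane [V], [pi] is a bijection onto [F^d], so
   [pi^V_up] is an injection [F^d -> V] with left inverse [pi^V_down].  Hence the
   hands of [N(V, rho)] are the preimages under the bijection [f] of the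
   complement of [V] (of size [q^(d+1) - q^d]) and of the images of the
   partition [X] inside [V]: they partition the deck with the prescribed sizes,
   and [f] maps them back to exactly the data required of a maximal execution
   with tokens [rho].  Every prefix of a maximal execution is then trivially
   extendable, so [(N(V, rho), rho)] is an execution. *)
From HB Require Import structures.
From mathcomp Require Import all_boot all_order all_algebra.
Import GRing.Theory.
Local Open Scope ring_scope.

Section Hyperplane.
Variables (F : finFieldType) (d : nat) (a : 'rV[F]_d) (b : F).

(* [iota_V] for [V = hyp a b]: the last coordinate is the affine form. *)
Definition hyp_lift (y : 'rV[F]_d) : 'rV[F]_d.+1 :=
  \row_(i < d.+1) match unlift ord_max i with
                  | Some j => y 0 j
                  | None => \sum_(j < d) a 0 j * y 0 j + b
                  end.

Lemma widen_ord_max (i : 'I_d) : widen_ord (leqnSn d) i = lift ord_max i.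
Proof. by apply/val_inj; rewrite /= /bump leqNgt ltn_ord. Qed.

Lemma proj_hyp_lift y : proj (hyp_lift y) = y.
Proof. by apply/rowP => i; rewrite !mxE widen_ord_max liftK. Qed.

Lemma hyp_lift_inj : injective hyp_lift.
Proof. by move=> x y exy; rewrite -(proj_hyp_lift x) exy proj_hyp_lift. Qed.

Lemma hyp_lift_in y : hyp_lift y \in hyp a b.
Proof.
rewrite inE !mxE unlift_none; apply/eqP; congr (_ + _); apply: eq_bigr => j _.
by rewrite mxE widen_ord_max liftK.
Qed.

Lemma proj_hypK w : w \in hyp a b -> hyp_lift (proj w) = w.
Proof.
rewrite inE => /eqP wV; apply/rowP => i; rewrite !mxE.
case: unliftP => [j ->|->]; first by rewrite mxE widen_ord_max.
by rewrite wV; congr (_ + _); apply: eq_bigr => j _; rewrite mxE.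
Qed.

Lemma card_hyp : #|hyp a b| = (#|F| ^ d)%N.
Proof.
have -> : hyp a b = hyp_lift @: [set: 'rV[F]_d].
  apply/setP => w; apply/idP/imsetP => [wV|[y _ ->]]; last exact: hyp_lift_in.
  by exists (proj w); rewrite ?inE ?proj_hypK.
by rewrite card_imset ?cardsT ?card_mx ?mul1n //; apply: hyp_lift_inj.
Qed.

Lemma proj_upE (Y : {set 'rV[F]_d}) :
  proj_up (hyp a b) a Y = (fun y => hyp_lift (y - a)) @: Y.
Proof.
apply/setP => w; rewrite inE; apply/andP/imsetP => [[wV wY]|[y yY ->]].
  by exists (proj w + a); rewrite ?addrK ?proj_hypK.
by rewrite hyp_lift_in proj_hyp_lift subrK.
Qed.

Lemma card_proj_up (Y : {set 'rV[F]_d}) : #|proj_up (hyp a b) a Y| = #|Y|.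
Proof.
rewrite proj_upE card_imset // => x y /hyp_lift_inj/eqP.
by rewrite subr_eq subrK => /eqP.
Qed.

Lemma proj_upK (Y : {set 'rV[F]_d}) : proj_down a (proj_up (hyp a b) a Y) = Y.
Proof.
apply/setP => y; apply/imsetP/idP => [[w]|yY].
  by rewrite inE => /andP[_ wY] ->.
exists (hyp_lift (y - a)); first by rewrite proj_upE; apply: imset_f.
by rewrite proj_hyp_lift subrK.
Qed.

End Hyperplane.

Section BijectivePreimage.
Variables (aT rT : finType) (f : aT -> rT).
Hypothesis f_bij : bijective f.

Lemma card_preimset_bij (S : {set rT}) : #|f @^-1: S| = #|S|.
Proof. exact/on_card_preimset/onW_bij. Qed.

Lemma imset_preimset_bij (S : {set rT}) : f @: (f @^-1: S) = S.
Proof.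
case: f_bij => g fK gK; rewrite (can2_imset_pre _ fK gK).
by apply/setP => x; rewrite !inE gK.
Qed.

End BijectivePreimage.

Section ShiftedProjectionDeal.
Variables (m d : nat) (F : finFieldType) (Omega : finType) (tau : agent m -> nat).
Variables (f : {ffun Omega -> 'rV[F]_d.+1}) (X : 'I_m -> {set 'rV[F]_d}).
Variables (a : 'rV[F]_d) (b : F).
Hypotheses (f_bij : bijective f) (X_part : is_partition X).

Lemma card_N_A : tau None = (#|F| ^ d.+1 - #|F| ^ d)%N ->
  #|N a b f X None| = tau None.
Proof.
by move=> tauA; rewrite card_preimset_bij // cardsCs setCK card_hyp card_mx mul1n.
Qed.

Lemma card_N_B k : #|X k| = tau (Some k) -> #|N a b f X (Some k)| = tau (Some k).
Proof. by move=> <-; rewrite card_preimset_bij // card_proj_up. Qed.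

Lemma disjoint_N P Q : P != Q -> [disjoint N a b f X P & N a b f X Q].
Proof.
case: X_part => X_disj _ nPQ; rewrite -setI_eq0; apply/eqP/setP => x.
rewrite in_set0 inE; apply/negP.
case: P Q nPQ => [i|] [j|] //= nij; rewrite !inE.
- case/andP=> /andP[_ Xi] /andP[_ Xj].
  have /X_disj : i != j by apply: contra nij => /eqP ->.
  by rewrite -setI_eq0 => /eqP/setP/(_ (proj (f x) + a)); rewrite !inE Xi Xj.
- by case/andP=> /andP[->].
- by case/andP=> /negP nV /andP[].
Qed.

Lemma cover_N : \bigcup_P N a b f X P = [set: Omega].
Proof.
case: X_part => _ X_cover; apply/setP => x; rewrite inE; apply/bigcupP.
have [fxV|fxNV] := boolP (f x \in hyp a b); last by exists None; rewrite //= inE in_setC.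
have : proj (f x) + a \in \bigcup_i X i by rewrite X_cover inE.
by case/bigcupP => k _ Xk; exists (Some k); rewrite //= inE /proj_up inE fxV.
Qed.

Lemma deal_N : tau None = (#|F| ^ d.+1 - #|F| ^ d)%N ->
  (forall k, #|X k| = tau (Some k)) -> deal tau (N a b f X).
Proof.
move=> tauA tauB; split; [|exact: disjoint_N|exact: cover_N].
by case=> [k|]; [apply: card_N_B | apply: card_N_A].
Qed.

Lemma maxexec_N : deal tau (N a b f X) -> maxexec tau (N a b f X) (rho f X).
Proof.
split=> //; exists f, X; split=> //; exists a, b; split=> [|k] /=.
  by rewrite imset_preimset_bij // setCK.
by rewrite imset_preimset_bij // proj_upK.
Qed.

End ShiftedProjectionDeal.

Lemma maxexec_execution (Omega : finType) (F : finFieldType) (m d : nat)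
  (tau : agent m -> nat) (H : agent m -> {set Omega}) (s : seq (token Omega F d)) :
  maxexec tau H s -> execution tau H s.
Proof. by move=> Hs s1 t s2 def_s; exists s2; rewrite cat_rcons -def_s. Qed.

Theorem mainTheorem10 (m q d : nat) (F : finFieldType) (Omega : finType)
  (tau : agent m -> nat)
  (f : {ffun Omega -> 'rV[F]_d.+1}) (X : 'I_m -> {set 'rV[F]_d}) :
  suitable m q d tau ->
  #|F| = q ->
  #|Omega| = tau_size tau ->
  bijective f ->
  is_partition X ->
  (forall k : 'I_m, #|X k| = tau (Some k)) ->
  forall (a : 'rV[F]_d) (b : F),
    deal tau (N a b f X) /\ execution tau (N a b f X) (rho f X).
Proof.
move=> [_ [_ _ tauA _]] cardF _ f_bij X_part tauB a b.
have dealN : deal tau (N a b f X) by apply: deal_N; rewrite // cardF.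
by split; last exact/maxexec_execution/maxexec_N.
Qed.
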